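(* Let $\mathcal{C}$ be an $[n,k]_q$ MWS code with $k\ge 2$. Then $$n\ge\left\lceil\frac{q\,\theta_q(k-1)}{2}\right\rceil=\left\lceil\frac{q^{k+1}-q}{2(q-1)}\right\rceil=\left\lceil\tfrac12\left(q^k+q^{k-1}+\dots+q\right)\right\rceil.$$
   Context: An $[n,k]_q$ code is a $k$-dimensional subspace of $\mathbb{F}_q^n$, non-degenerate (no coordinate identically zero on the code). $\theta_q(k-1)=\frac{q^k-1}{q-1}$. The code is MWS if the set of its non-zero Hamming weights has cardinality $\theta_q(k-1)$. *)

From HB Require Import structures.
From mathcomp Require Import all_boot all_order all_algebra.
Set Implicit Arguments. Unset Strict Implicit. Unset Printing Implicit Defensive.
Import GRing.Theory.
Local Open Scope ring_scope.

(* Codes over a finite field F with q = #|F| elements: a code is a subspace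
   C : {vspace 'rV[F]_n}; it is an [n,k]_q code when \dim C = k. *)

Definition wt (F : finFieldType) (n : nat) (c : 'rV[F]_n) : nat :=
  #|[set i : 'I_n | c 0 i != 0]|.

Definition nondeg_code (F : finFieldType) (n : nat) (C : {vspace 'rV[F]_n}) : Prop :=
  forall i : 'I_n, exists2 c : 'rV[F]_n, c \in C & c 0 i != 0.

Definition nz_weights (F : finFieldType) (n : nat) (C : {vspace 'rV[F]_n}) : seq nat :=
  undup [seq wt c | c <- enum 'rV[F]_n & (c \in C) && (c != 0)].

Definition theta (q m : nat) : nat := ((q ^ m.+1 - 1) %/ (q - 1))%N.

Definition MWS (F : finFieldType) (n : nat) (C : {vspace 'rV[F]_n}) : Prop :=
  size (nz_weights C) = theta #|F| (\dim C).-1.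

From HB Require Import structures.
From mathcomp Require Import all_boot all_order all_algebra all_field zify.
Set Implicit Arguments.
Unset Strict Implicit.
Unset Printing Implicit Defensive.
Import GRing.Theory.

(* The q - 1 nonzero multiples of a codeword share its weight, and an MWS code
   has exactly theta_q(k-1) = (q^k - 1)/(q - 1) nonzero weights for its q^k - 1
   nonzero codewords; so every nonzero weight is carried by exactly q - 1
   codewords.  Counting nonzero entries column by column, the weights of all
   codewords add up to n (q^k - q^(k-1)), hence the theta distinct weights add
   up to n q^(k-1).  Being distinct integers in [0, n], they add up to at most
   theta n - binomial(theta, 2), so binomial(theta, 2) <= n theta_q(k-2); since
   theta - 1 = q theta_q(k-2), this is q theta <= 2 n. *)


Lemma sorted_ltn_sum_ge (m : nat) (s : seq nat) : sorted ltn s -> all (leq m) s ->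
  m * size s + 'C(size s, 2) <= \sum_(x <- s) x.
Proof.
elim: s m => [|x s IHs] m; first by rewrite muln0.
move=> /= x_s /andP[m_x m_s].
have /IHs x_sum : all (leq x.+1) s by exact: order_path_min ltn_trans x_s.
rewrite big_cons binS bin1.
have := x_sum (path_sorted x_s); nia.
Qed.

Lemma uniq_sum_ge (s : seq nat) : uniq s -> 'C(size s, 2) <= \sum_(x <- s) x.
Proof.
move=> s_uniq; have sort_s := permEl (perm_sort leq s).
rewrite -(perm_big _ sort_s) -(perm_size sort_s).
have sorted_s : sorted ltn (sort leq s).
  by rewrite ltn_sorted_uniq_leq sort_uniq s_uniq sort_sorted //; exact: leq_total.
by have := @sorted_ltn_sum_ge 0 _ sorted_s; rewrite mul0n; apply; apply/allP.
Qed.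

Lemma uniq_sum_le (n : nat) (s : seq nat) : uniq s -> {in s, forall x, x <= n} ->
  \sum_(x <- s) x + 'C(size s, 2) <= size s * n.
Proof.
move=> s_uniq s_le.
have : uniq [seq n - x | x <- s].
  by rewrite map_inj_in_uniq // => x y /s_le x_le /s_le y_le; lia.
move/uniq_sum_ge; rewrite size_map big_map => sum_ge.
have -> : size s * n = \sum_(x <- s) x + \sum_(x <- s) (n - x).
  rewrite -big_split /= big_seq (eq_bigr (fun=> n)) -?big_seq.
    by rewrite big_const_seq count_predT iter_addn_0 mulnC.
  by move=> x /s_le; lia.
by rewrite leq_add2l.
Qed.

Lemma leq_sum_eq (I : eqType) (r : seq I) (E1 E2 : I -> nat) :
  {in r, forall i, E1 i <= E2 i} -> \sum_(i <- r) E1 i = \sum_(i <- r) E2 i ->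
  {in r, E1 =1 E2}.
Proof.
move=> le12 eq12 i ir; apply/eqP; rewrite eqn_leq le12 //= -subn_eq0.
have : \sum_(j <- r) (E2 j - E1 j) == 0.
  by rewrite big_seq sumnB -?big_seq ?eq12 ?subnn //; exact: le12.
by rewrite sum_nat_seq_eq0 => /allP/(_ i ir).
Qed.

Section Theta.
Variable q : nat.
Hypothesis q_gt1 : 1 < q.

Lemma thetaE (m : nat) : theta q m = \sum_(i < m.+1) q ^ i.
Proof. by rewrite /theta !subn1 predn_exp mulKn // -subn1 subn_gt0. Qed.

Lemma mul_theta (m : nat) : q.-1 * theta q m = (q ^ m.+1).-1.
Proof. by rewrite thetaE predn_exp. Qed.

Lemma thetaSl (m : nat) : theta q m.+1 = (q * theta q m).+1.
Proof.
rewrite !thetaE big_ord_recl expn0 big_distrr /=; congr _.+1.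
by apply: eq_bigr => i _; rewrite expnS.
Qed.

Lemma thetaSr (m : nat) : theta q m.+1 = theta q m + q ^ m.+1.
Proof. by rewrite !thetaE big_ord_recr. Qed.

Lemma theta_gt0 (m : nat) : 0 < theta q m.
Proof. by case: m => [|m]; rewrite ?thetaSl // thetaE big_ord1. Qed.

End Theta.

Lemma wtZ {F : finFieldType} {n : nat} (a : F) (c : 'rV[F]_n) :
  a != 0%R -> wt (a *: c) = wt c.
Proof. by move=> a_neq0; apply: eq_card => j; rewrite !inE mxE mulf_eq0 (negbTE a_neq0). Qed.

Lemma wt_le {F : finFieldType} {n : nat} (c : 'rV[F]_n) : wt c <= n.
Proof. by rewrite -[n in _ <= n]card_ord max_card. Qed.

Section LinearCode.
Variables (F : finFieldType) (n : nat) (C : {vspace 'rV[F]_n}).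
Local Open Scope ring_scope.

Lemma card_code_coord_neq0 (i : 'I_n) : (exists2 c, c \in C & c 0 i != 0) ->
  #|[set c in C | c 0 i != 0]| = (#|F| ^ \dim C - #|F| ^ (\dim C).-1)%N.
Proof.
case=> c0 c0C c0i.
pose f : 'Hom('rV[F]_n, 'cV[F]_1) := linfun (col i).
have f_eq0 c : (f c == 0) = (c 0 i == 0).
  rewrite lfunE /=; apply/eqP/eqP => [/matrixP/(_ 0 0)|ci0]; first by rewrite !mxE.
  by apply/matrixP => j k; rewrite !ord1 !mxE.
have dim_img : \dim (f @: C) = 1%N.
  have img_le1 : (\dim (f @: C) <= 1)%N.
    by rewrite (leq_trans (dimvS (subvf _))) // dimvf /dim /= muln1.
  have img_neq0 : (f @: C)%VS != 0%VS.
    apply/eqP => /vspaceP/(_ (f c0)).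
    by rewrite memv_img // memv0 f_eq0 (negbTE c0i).
  by apply/eqP; rewrite eqn_leq img_le1 lt0n dimv_eq0.
have := limg_ker_dim f C; rewrite dim_img addn1 => dim_ker.
have -> : [set c in C | c 0 i != 0] = [set c in C] :\: [set c in (C :&: lker f)%VS].
  by apply/setP => c; rewrite !inE memv_cap memv_ker f_eq0; case: (c \in C); rewrite ?andbT.
rewrite cardsD; congr (_ - _)%N.
  by rewrite -card_vspace; apply: eq_card => c; rewrite inE.
rewrite -dim_ker /= -card_vspace; apply: eq_card => c.
by rewrite !inE memv_cap; case: (c \in C); rewrite ?andbF.
Qed.

Lemma sum_wt_code : nondeg_code C ->
  (\sum_(c in C) wt c = n * (#|F| ^ \dim C - #|F| ^ (\dim C).-1))%N.
Proof.
move=> C_nondeg.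
have wt_sum (c : 'rV[F]_n) : wt c = (\sum_(i < n) (c 0%R i != 0%R))%N.
  by rewrite /wt -sum1_card big_mkcond; apply: eq_bigr => i _; rewrite inE; case: (_ != _).
under eq_bigr do rewrite wt_sum.
rewrite exchange_big /= -[X in (X * _)%N]card_ord -sum_nat_const.
apply: eq_bigr => i _; rewrite -(card_code_coord_neq0 (C_nondeg i)) -sum1_card.
rewrite big_mkcond [RHS]big_mkcond; apply: eq_bigr => c _; rewrite inE.
by case: (c \in C).
Qed.

Definition nz_code : {set 'rV[F]_n} := [set c in C | c != 0].

Definition weight_class (w : nat) : {set 'rV[F]_n} := [set c in nz_code | wt c == w].

Lemma card_nz_code : #|nz_code| = (#|F| ^ \dim C).-1.
Proof.
rewrite -card_vspace [in RHS](cardD1 0) mem0v; apply: eq_card => c.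
by rewrite !inE andbC.
Qed.

Lemma nz_weightsP (w : nat) :
  reflect (exists c, c \in weight_class w) (w \in nz_weights C).
Proof.
rewrite mem_undup; apply: (iffP mapP) => [[c] | [c]].
  by rewrite mem_filter mem_enum andbT => c_nz ->; exists c; rewrite !inE eqxx andbT.
rewrite !inE => /andP[c_nz /eqP <-].
by exists c; rewrite // mem_filter mem_enum andbT.
Qed.

Lemma nz_weights_le : {in nz_weights C, forall w, w <= n}%N.
Proof. by move=> w /nz_weightsP[c /[!inE] /andP[_ /eqP <-]]; exact: wt_le. Qed.

Lemma card_weight_class_ge (w : nat) :
  w \in nz_weights C -> (#|F|.-1 <= #|weight_class w|)%N.
Proof.
case/nz_weightsP=> c /[!inE] /andP[/andP[cC c_neq0] /eqP <-].
have scale_inj : injective (fun a : F => a *: c).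
  move=> a b /eqP; rewrite -subr_eq0 -scalerBl scaler_eq0 (negbTE c_neq0) orbF.
  by rewrite subr_eq0 => /eqP.
rewrite -(cardsC1 (0 : F)) -(card_imset [set~ 0] scale_inj); apply: subset_leq_card.
apply/subsetP => _ /imsetP[a a_neq0 ->]; rewrite in_setC1 in a_neq0.
by rewrite !inE memvZ // scaler_eq0 negb_or a_neq0 c_neq0 wtZ ?eqxx.
Qed.

Lemma sum_nz_code_by_weight (G : nat -> nat) :
  (\sum_(c in nz_code) G (wt c) = \sum_(w <- nz_weights C) #|weight_class w| * G w)%N.
Proof.
transitivity (\sum_(c in nz_code) \sum_(w <- nz_weights C | wt c == w) G w)%N.
  apply: eq_bigr => c c_nz.
  rewrite (eq_bigl (pred1 (wt c))) => [|w]; last by rewrite /= eq_sym.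
  rewrite -big_filter filter_pred1_uniq ?big_seq1 ?undup_uniq //.
  by apply/nz_weightsP; exists c; rewrite inE c_nz eqxx.
rewrite (exchange_big_dep predT) //=; apply: eq_bigr => w _.
by rewrite -sum_nat_const; apply: eq_bigl => c; rewrite !inE.
Qed.

Hypothesis dimC_gt0 : (0 < \dim C)%N.

Lemma MWS_card_weight_class : MWS C ->
  {in nz_weights C, forall w, #|weight_class w| = #|F|.-1}.
Proof.
move=> C_MWS w wW; symmetry; apply: (leq_sum_eq (E1 := fun=> _) card_weight_class_ge _ wW).
rewrite big_const_seq count_predT iter_addn_0 C_MWS mul_theta ?finNzRing_gt1 //.
rewrite prednK // -card_nz_code -sum1_card.
by rewrite (sum_nz_code_by_weight (fun=> 1%N)); under eq_bigr do rewrite muln1.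
Qed.

Lemma MWS_sum_nz_weights : nondeg_code C -> MWS C ->
  (\sum_(w <- nz_weights C) w = n * #|F| ^ (\dim C).-1)%N.
Proof.
move=> C_nondeg C_MWS.
have q_gt1 : (1 < #|F|)%N := finNzRing_gt1 F.
have wt0 : wt (0 : 'rV[F]_n) = 0%N by apply: eq_card0 => i; rewrite !inE mxE eqxx.
apply/eqP; rewrite -(eqn_pmul2l (_ : 0 < #|F|.-1)%N); last by rewrite -subn1 subn_gt0.
rewrite big_distrr /= big_seq (eq_bigr (fun w => #|weight_class w| * w))%N; last first.
  by move=> w wW; rewrite MWS_card_weight_class.
rewrite -big_seq -sum_nz_code_by_weight.
have -> : (\sum_(c in nz_code) wt c = \sum_(c in C) wt c)%N.
  rewrite [RHS](bigD1 0) ?mem0v //= wt0 add0n; apply: eq_bigl => c.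
  by rewrite !inE andbC.
rewrite sum_wt_code // -{1}(prednK dimC_gt0) expnS.
by rewrite -[X in (_ - X)%N]mul1n -mulnBl subn1 mulnCA.
Qed.

End LinearCode.

Theorem mainTheorem10 (F : finFieldType) (n k : nat) (C : {vspace 'rV[F]_n}) :
  \dim C = k -> (2 <= k)%N -> nondeg_code C -> MWS C ->
  (((#|F| * theta #|F| k.-1).+1 %/ 2) <= n)%N.
Proof.
move=> dimC k_ge2 C_nondeg C_MWS.
have q_gt1 : 1 < #|F| := finNzRing_gt1 F.
have dimC_gt0 : 0 < \dim C by rewrite dimC ltnW.
have := uniq_sum_le (undup_uniq _) (nz_weights_le (C := C)).
rewrite MWS_sum_nz_weights // C_MWS dimC.
case: k k_ge2 {dimC C_MWS} => [|[|k]] // _ /=.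
set t := theta #|F| k.
rewrite {2}thetaSr // mulnDl [_ ^ _ * n]mulnC addnC leq_add2r => bin_le.
have : theta #|F| k.+1 * #|F| * t <= 2 * n * t.
  have theta_pred : (theta #|F| k.+1).-1 = #|F| * t by rewrite thetaSl.
  rewrite -mulnA -theta_pred -[X in _ * X]bin1 mul_bin_diag.
  by rewrite [2 * n]mulnC -mulnA mulnCA leq_pmul2l // mulnC.
rewrite leq_pmul2r ?theta_gt0 // => le2n.
by rewrite -ltnS ltn_divLR // mulSn add2n !ltnS [n * 2]mulnC mulnC.
Qed.
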